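(* Let $K\subset K'$ be a field extension, $x=(x_1,\ldots,x_n)$, and let $M\subset K[x]^p$ be a finitely generated $K[x]$-submodule. Let $J_1,\ldots,J_p$ be subsets of $\{1,\ldots,n\}$, write $x_{J_i}=(x_k)_{k\in J_i}$, and set $A_i=K[x_{J_i}]$, $A'_i=K'[x_{J_i}]$ for $i\in\{1,\ldots,p\}$. Put $$\mathcal{N}=M\cap (A_1\times\cdots\times A_p),\qquad \mathcal{N}'=(K'[x]M)\cap(A'_1\times\cdots\times A'_p),$$ where $K'[x]M\subset K'[x]^p$ is the $K'[x]$-submodule generated by $M$. If $\hat u=\sum_{j=1}^r w_j\hat v_j\in\mathcal{N}'$ for some $w_1,\ldots,w_r\in M$ and $\hat v_1,\ldots,\hat v_r\in K'[x]$, then there exist $v_1,\ldots,v_r\in K[x]$ such that $u=\sum_{j=1}^r w_jv_j\in\mathcal{N}$ and $\min_{i\in\{1,\ldots,p\}}\operatorname{ord} u_i=\min_{i\in\{1,\ldots,p\}}\operatorname{ord}\hat u_i$.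
   Context: For a polynomial $g$ in $x$, $\operatorname{ord} g$ denotes its order, i.e. the least total degree of a monomial appearing in $g$ with nonzero coefficient ($\operatorname{ord}0=\infty$). For a vector $u=(u_1,\ldots,u_p)$, $u_i$ denotes its $i$-th component. *)

From mathcomp Require Import all_boot all_algebra.
From mathcomp Require Import mpoly.
Set Implicit Arguments. Unset Strict Implicit. Unset Printing Implicit Defensive.
Import GRing.Theory.
Local Open Scope ring_scope.

(* Order of a polynomial: least total degree of a monomial with nonzero
   coefficient; None encodes +infinity (ord 0 = oo). *)
Definition mord (R : ringType) (n : nat) (q : {mpoly R[n]}) : option nat :=
  match [seq mdeg m | m <- msupp q] with
  | [::] => None
  | d :: ds => Some (foldr minn d ds)
  end.

Definition omin (a b : option nat) : option nat :=
  match a, b with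
  | None, _ => b
  | _, None => a
  | Some x, Some y => Some (minn x y)
  end.

Definition vord (R : ringType) (n p : nat) (u : 'rV[{mpoly R[n]}]_p) : option nat :=
  foldr omin None [seq mord (u 0 i) | i <- enum 'I_p].

Definition in_subring (R : ringType) (n : nat) (J : {set 'I_n}) (q : {mpoly R[n]}) : Prop :=
  forall m, m \in msupp q -> forall k : 'I_n, k \notin J -> m k = 0%N.

Definition fin_gen_submod (R : comRingType) (V : lmodType R) (M : V -> Prop) : Prop :=
  exists (s : nat) (g : 'I_s -> V),
    forall u, M u <-> exists c : 'I_s -> R, u = \sum_(i < s) c i *: g i.

Definition gen_submod (R : comRingType) (V : lmodType R) (S : V -> Prop) (u : V) : Prop :=
  exists (k : nat) (c : 'I_k -> R) (g : 'I_k -> V),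
    (forall i, S (g i)) /\ u = \sum_(i < k) c i *: g i.

(* Choose elements e_1, ..., e_m of K' that are linearly independent over K and
   whose K-span contains every coefficient of the v̂_j.  Writing
   v̂_j = Σ_l e_l v_{l,j} with v_{l,j} ∈ K[x] gives û = Σ_l e_l u_l with
   u_l = Σ_j w_j v_{l,j} ∈ M.  By independence, every monomial of a component
   of u_l occurs in the same component of û, so u_l ∈ N and ord u_l ≥ ord û;
   and a monomial of û of minimal degree occurs in some u_l, which therefore
   has the same order as û. *)

From mathcomp Require Import all_boot all_algebra.
From mathcomp Require Import mpoly.
From Stdlib Require Import ClassicalEpsilon.
Import GRing.Theory.
Set Implicit Arguments. Unset Strict Implicit.
Local Open Scope ring_scope.

Lemma foldr_omin_None (l : seq (option nat)) :
  foldr omin None l = None -> {in l, forall x, x = None}.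
Proof.
elim: l => [|y l IH] //= + x; case: y => [y|] /=; first by case: (foldr _ _ _).
by move=> /IH l0; rewrite inE => /predU1P [-> //|]; apply: l0.
Qed.

Lemma foldr_omin_Some (l : seq (option nat)) d :
  foldr omin None l = Some d ->
  Some d \in l /\ forall e, Some e \in l -> (d <= e)%N.
Proof.
elim: l d => [|y l IH] //= d.
case: y => [y|] /=; last first.
  by move=> /IH [dl d_min]; split=> [|e]; rewrite inE ?dl ?orbT //; apply: d_min.
case E: (foldr omin None l) => [z|] [<-]; last first.
  split=> [|e]; rewrite !inE ?eqxx // => /predU1P [[->] //|/foldr_omin_None].
  by move=> /(_ E).
have [zl z_min] := IH _ E; split.
  by rewrite /minn; case: ifP; rewrite !inE ?eqxx ?zl ?orbT.
by move=> e; rewrite inE => /predU1P [[->]|/z_min z_e]; rewrite geq_min ?leqnn ?z_e ?orbT.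
Qed.

Lemma mordE (R : nzRingType) n (q : {mpoly R[n]}) :
  mord q = foldr omin None [seq Some (mdeg m) | m <- msupp q].
Proof.
rewrite /mord (map_comp Some mdeg); case: (map mdeg (msupp q)) => // d ds /=.
elim: ds => //= y ds; case: (foldr omin None _) => [z|] /= [->]; last by rewrite minnC.
by rewrite minnCA.
Qed.

Lemma mord_Some (R : nzRingType) n (q : {mpoly R[n]}) d : mord q = Some d ->
  (exists2 m, m \in msupp q & mdeg m = d) /\
  (forall m, m \in msupp q -> (d <= mdeg m)%N).
Proof.
rewrite mordE => /foldr_omin_Some [/mapP [m mq [->]] d_min]; split; first by exists m.
by move=> m' m'q; apply: d_min; apply: map_f.
Qed.

Lemma vord_None (R : nzRingType) n p (u : 'rV[{mpoly R[n]}]_p) :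
  vord u = None -> forall i, msupp (u 0 i) = [::].
Proof.
move=> /foldr_omin_None u0 i.
have : mord (u 0 i) = None by apply: u0; apply: map_f; rewrite mem_enum.
by rewrite /mord; case: (msupp _).
Qed.

Lemma vord_Some (R : nzRingType) n p (u : 'rV[{mpoly R[n]}]_p) d : vord u = Some d ->
  (exists i, exists2 m, m \in msupp (u 0 i) & mdeg m = d) /\
  (forall i m, m \in msupp (u 0 i) -> (d <= mdeg m)%N).
Proof.
move=> /foldr_omin_Some [/mapP [i0 _ /esym /mord_Some [attained _]] d_min].
split; first by exists i0.
move=> i m mu; case E: (mord (u 0 i)) => [e|]; last first.
  by move: mu; rewrite /mord in E; case: (msupp _) E.
apply: leq_trans (d_min e _) ((mord_Some E).2 m mu).
by rewrite -E; apply: map_f; rewrite mem_enum.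
Qed.

Lemma vord_eq_subsupp (R S : nzRingType) n p
    (u : 'rV[{mpoly R[n]}]_p) (u' : 'rV[{mpoly S[n]}]_p) :
  (forall i, {subset msupp (u 0 i) <= msupp (u' 0 i)}) ->
  (forall d, vord u' = Some d ->
     exists i, exists2 m, m \in msupp (u 0 i) & mdeg m = d) ->
  vord u = vord u'.
Proof.
move=> sub attained; case E': (vord u') => [d|].
  have [i [m mu md]] := attained d E'.
  have [_ d_min] := vord_Some E'.
  case E: (vord u) => [e|]; last by rewrite (vord_None E) in mu.
  have [[i' [m' mu' m'e]] e_min] := vord_Some E.
  congr Some; apply/eqP; rewrite eqn_leq -{1}md (e_min _ _ mu) -m'e.
  by rewrite (d_min _ _ (sub _ _ mu')).
case E: (vord u) => [e|] //.
have [[i [m mu _]] _] := vord_Some E.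
by move: (sub i m mu); rewrite (vord_None E').
Qed.

Lemma fin_gen_submod_comb (R : comNzRingType) (V : lmodType R) (M : V -> Prop)
    r (w : 'I_r -> V) (v : 'I_r -> R) :
  fin_gen_submod M -> (forall j, M (w j)) -> M (\sum_j v j *: w j).
Proof.
move=> [s [g M_span]] Mw.
have [c wE] := fin_all_exists (fun j => (M_span (w j)).1 (Mw j)).
apply/M_span; exists (fun i => \sum_j v j * c j i).
under eq_bigr do rewrite wE scaler_sumr.
rewrite exchange_big; apply: eq_bigr => i _; rewrite scaler_suml.
by apply: eq_bigr => j _; rewrite scalerA.
Qed.

Lemma mcoeff_map_mpoly_fun (R S : nzRingType) n (g : R -> S) (q : {mpoly R[n]}) m :
  (map_mpoly g q)@_m = if m \in msupp q then g q@_m else 0.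
Proof.
rewrite /map_mpoly /mmap raddf_sum /=.
under eq_bigr do rewrite mmap1_id /= mcoeffCM mcoeffX.
case: ifP => mq.
  rewrite (bigD1_seq m) ?msupp_uniq //= eqxx mulr1 big1 ?addr0 // => m' m'm.
  by rewrite (negPf m'm) mulr0.
by rewrite big1_seq // => m' /= m'q; case: eqP m'q => [->|]; rewrite ?mq ?mulr0.
Qed.

Definition ord_cons (T : Type) m (x : T) (e : 'I_m -> T) (l : 'I_m.+1) : T :=
  if unlift ord0 l is Some l' then e l' else x.

Lemma ord_cons0 (T : Type) m (x : T) (e : 'I_m -> T) : ord_cons x e ord0 = x.
Proof. by rewrite /ord_cons unlift_none. Qed.

Lemma ord_cons_lift (T : Type) m (x : T) (e : 'I_m -> T) l :
  ord_cons x e (lift ord0 l) = e l.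
Proof. by rewrite /ord_cons liftK. Qed.

Section FreeOverSubfield.

Variables (K K' : fieldType) (f : {rmorphism K -> K'}).

Definition span_over m (e : 'I_m -> K') (y : K') : Prop :=
  exists c : 'I_m -> K, y = \sum_l f (c l) * e l.

Definition free_over m (e : 'I_m -> K') : Prop :=
  forall c : 'I_m -> K, \sum_l f (c l) * e l = 0 -> forall l, c l = 0.

Lemma sum_ord_cons m (c : 'I_m.+1 -> K) (e : 'I_m -> K') y :
  \sum_l f (c l) * ord_cons y e l
  = f (c ord0) * y + \sum_l f (c (lift ord0 l)) * e l.
Proof. by rewrite big_ord_recl ord_cons0; under eq_bigr do rewrite ord_cons_lift. Qed.

Lemma span_over_cons m (e : 'I_m -> K') y z :
  span_over e z -> span_over (ord_cons y e) z.
Proof.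
move=> [c ->]; exists (ord_cons 0 c).
rewrite sum_ord_cons ord_cons0 rmorph0 mul0r add0r.
by apply: eq_bigr => l _; rewrite ord_cons_lift.
Qed.

Lemma span_over_cons_head m (e : 'I_m -> K') y : span_over (ord_cons y e) y.
Proof.
exists (ord_cons 1 (fun _ => 0)).
rewrite sum_ord_cons ord_cons0 rmorph1 mul1r big1 ?addr0 // => l _.
by rewrite ord_cons_lift rmorph0 mul0r.
Qed.

Lemma free_over_cons m (e : 'I_m -> K') y :
  free_over e -> ~ span_over e y -> free_over (ord_cons y e).
Proof.
move=> e_free y_out c; rewrite sum_ord_cons => c_rel.
have c0 : c ord0 = 0.
  apply/eqP/negPn/negP => c0_neq0; apply: y_out.
  have fc0 : f (c ord0) != 0 by rewrite fmorph_eq0.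
  exists (fun l => - c (lift ord0 l) / c ord0); apply: (mulfI fc0).
  move/eqP: c_rel; rewrite addr_eq0 => /eqP ->.
  rewrite mulr_sumr -sumrN; apply: eq_bigr => l _.
  by rewrite fmorph_div rmorphN mulrA mulrCA divff // mulr1 mulNr.
move: c_rel; rewrite c0 rmorph0 mul0r add0r => /e_free c_lift l.
by case: (unliftP ord0 l) => [l' ->|->].
Qed.

Lemma free_over_spanning (s : seq K') :
  exists m (e : 'I_m -> K'), free_over e /\ {in s, forall y, span_over e y}.
Proof.
elim: s => [|y s [m [e [e_free s_span]]]].
  by exists 0%N, (fun _ => 0); split=> // c _ [].
have [y_in|y_out] := classic (span_over e y).
  by exists m, e; split=> // z; rewrite inE => /predU1P [->|/s_span].
exists m.+1, (ord_cons y e); split; first exact: free_over_cons.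
move=> z; rewrite inE => /predU1P [->|/s_span]; first exact: span_over_cons_head.
exact: span_over_cons.
Qed.

Variable n : nat.

Lemma mcoeff_comb m (e : 'I_m -> K') (Q : 'I_m -> {mpoly K[n]}) mon :
  (\sum_l e l *: map_mpoly f (Q l))@_mon = \sum_l f (Q l)@_mon * e l.
Proof.
rewrite raddf_sum /=; apply: eq_bigr => l _.
by rewrite mcoeffZ mcoeff_map_mpoly mulrC.
Qed.

Lemma msupp_comb_exists m (e : 'I_m -> K') (Q : 'I_m -> {mpoly K[n]}) mon :
  mon \in msupp (\sum_l e l *: map_mpoly f (Q l)) ->
  exists l, mon \in msupp (Q l).
Proof.
case: (pickP (fun l => mon \in msupp (Q l))) => [l ? _|Q0]; first by exists l.
rewrite mcoeff_msupp mcoeff_comb big1 ?eqxx // => l _.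
by rewrite memN_msupp_eq0 ?Q0 // rmorph0 mul0r.
Qed.

Lemma msupp_free_comb m (e : 'I_m -> K') (Q : 'I_m -> {mpoly K[n]}) l :
  free_over e -> {subset msupp (Q l) <= msupp (\sum_l e l *: map_mpoly f (Q l))}.
Proof.
move=> e_free mon; rewrite !mcoeff_msupp mcoeff_comb; apply: contra => /eqP.
by move=> /(e_free (fun l => (Q l)@_mon)) ->.
Qed.

Lemma mpoly_free_decomposition (I : finType) (q : I -> {mpoly K'[n]}) :
  exists m (e : 'I_m -> K') (Q : 'I_m -> I -> {mpoly K[n]}),
    free_over e /\ forall j, q j = \sum_l e l *: map_mpoly f (Q l j).
Proof.
pose s := [seq (q j)@_mon | j <- enum I, mon <- msupp (q j)].
have [m [e [e_free s_span]]] := free_over_spanning s.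
have [a a_coord] : exists a : K' -> 'I_m -> K,
    forall y, y \in s -> y = \sum_l f (a y l) * e l.
  apply: (ClassicalEpsilon.choice (fun y c => y \in s -> y = \sum_l f (c l) * e l)) => y.
  have [/s_span [c yE]|y_out] := boolP (y \in s); first by exists c.
  by exists (fun _ => 0).
exists m, e, (fun l j => map_mpoly (a^~ l) (q j)); split=> // j.
apply/mpolyP => mon; rewrite mcoeff_comb.
have [mq|mq] := boolP (mon \in msupp (q j)); last first.
  rewrite memN_msupp_eq0 // big1 // => l _.
  by rewrite mcoeff_map_mpoly_fun (negPf mq) rmorph0 mul0r.
under eq_bigr do rewrite mcoeff_map_mpoly_fun mq.
by apply: a_coord; apply: (allpairs_f_dep (fun j mon => (q j)@_mon)); rewrite ?mem_enum.
Qed.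

Lemma entry_comb_map_mx p r m (e : 'I_m -> K')
    (P : 'I_m -> 'I_r -> {mpoly K[n]}) (w : 'I_r -> 'rV[{mpoly K[n]}]_p) i :
  (\sum_j (\sum_l e l *: map_mpoly f (P l j)) *: map_mx (map_mpoly f) (w j)) 0 i
  = \sum_l e l *: map_mpoly f ((\sum_j P l j *: w j) 0 i).
Proof.
rewrite summxE; under eq_bigr do rewrite !mxE mulr_suml.
rewrite exchange_big; apply: eq_bigr => l _.
rewrite summxE rmorph_sum scaler_sumr; apply: eq_bigr => j _.
by rewrite !mxE rmorphM scalerAl.
Qed.

End FreeOverSubfield.

Theorem proposition1p1 (K K' : fieldType) (f : {rmorphism K -> K'})
  (n p : nat) (M : 'rV[{mpoly K[n]}]_p -> Prop)
  (hM : fin_gen_submod M)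
  (J : 'I_p -> {set 'I_n})
  (r : nat) (w : 'I_r -> 'rV[{mpoly K[n]}]_p) (vhat : 'I_r -> {mpoly K'[n]})
  (hw : forall j, M (w j)) :
  let ext := fun u : 'rV[{mpoly K[n]}]_p => map_mx (map_mpoly f) u in
  let uhat := \sum_(j < r) vhat j *: ext (w j) in
  (gen_submod (fun u' => exists u, M u /\ u' = ext u) uhat /\
   forall i : 'I_p, in_subring (J i) (uhat 0 i)) ->
  exists v : 'I_r -> {mpoly K[n]},
    let u := \sum_(j < r) v j *: w j in
    (M u /\ forall i : 'I_p, in_subring (J i) (u 0 i)) /\
    vord u = vord uhat.
Proof.
(* Membership of uhat in K'[x]M is automatic from its shape, hence unused. *)
move=> ext uhat [_ uhat_sub].
have [m [e [V [e_free vhatE]]]] := mpoly_free_decomposition f vhat.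
pose U l := \sum_j V l j *: w j.
have uhatE i : uhat 0 i = \sum_l e l *: map_mpoly f (U l 0 i).
  rewrite -entry_comb_map_mx /uhat; congr (_ 0 i).
  by under eq_bigr do rewrite vhatE.
have U_sub l i : {subset msupp (U l 0 i) <= msupp (uhat 0 i)}.
  by rewrite uhatE; apply: (msupp_free_comb (Q := fun l => U l 0 i)).
have N_of_supp_sub v :
    (forall i, {subset msupp ((\sum_j v j *: w j) 0 i) <= msupp (uhat 0 i)}) ->
    M (\sum_j v j *: w j) /\ forall i, in_subring (J i) ((\sum_j v j *: w j) 0 i).
  by move=> sub; split=> [|i mon /sub]; [apply: fin_gen_submod_comb | apply: uhat_sub].
case E: (vord uhat) => [d|].
  have [[i [mon mon_uhat mon_d]] _] := vord_Some E.
  have [l mon_U] : exists l, mon \in msupp (U l 0 i).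
    by apply: (msupp_comb_exists (f := f) (e := e)); rewrite -uhatE.
  exists (V l); split; first exact: N_of_supp_sub (U_sub l).
  rewrite -E; apply: vord_eq_subsupp => [|d']; first exact: U_sub.
  by rewrite E => -[<-]; exists i, mon.
pose v0 : 'I_r -> {mpoly K[n]} := fun _ => 0.
have no_supp i : msupp ((\sum_j v0 j *: w j) 0 i) = [::].
  rewrite big1 => [|j _]; last by rewrite scale0r.
  by rewrite mxE; apply/eqP; rewrite msupp_eq0.
exists v0; split; first by apply: N_of_supp_sub => i; rewrite no_supp.
by rewrite -E; apply: vord_eq_subsupp => [i|d]; [rewrite no_supp | rewrite E].
Qed.
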